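(* Let $u$ be a fast decreasing distribution on $\mathbb R^D$ (acting on $\mathbb C[\boldsymbol x]$), $\mathcal Q_2\in\mathbb C[\boldsymbol x]$ with $Z(\mathcal Q_2)\cap\operatorname{supp}u=\varnothing$, and $\check u$ a linear functional on $\mathbb C[\boldsymbol x]$ with $\mathcal Q_2\check u=u$; assume $u,\check u$ quasi-definite. Let $R=\langle\check u,P(\boldsymbol x)\chi(\boldsymbol x)^\top\rangle$ and $\omega_1=\check SS^{-1}$. Then: (1) the truncations $R^{[k]}$ are nonsingular for all $k\ge1$; (2) for each $k\ge1$, $\big((\omega_1)_{[k],[0]},\dots,(\omega_1)_{[k],[k-1]}\big)=-\big(R_{[k],[0]},\dots,R_{[k],[k-1]}\big)\big(R^{[k]}\big)^{-1}$; (3) consequently, for $l\in\{0,\dots,k-1\}$, $(\omega_1)_{[k],[l]}=-\big(R_{[k],[0]},\dots,R_{[k],[k-1]}\big)\big(R^{[k]}\big)^{-1}E_l$, where $E_l$ is the block column with identity block $\mathbb I_{[l]}$ in block position $l$ and zero blocks elsewhere.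
   Context: $D\ge1$, $\boldsymbol x=(x_1,\dots,x_D)^\top$. For $k\in\mathbb Z_+$, $[k]=\{\boldsymbol\alpha\in\mathbb Z_+^D:|\boldsymbol\alpha|=k\}$. Multi-indices are ordered by graded lexicographic order; $\chi(\boldsymbol x)$ is the semi-infinite vector of monomials $\boldsymbol x^{\boldsymbol\alpha}$ in this order with blocks $\chi_{[k]}=(\boldsymbol x^{\boldsymbol\alpha})_{\boldsymbol\alpha\in[k]}$; semi-infinite matrices are partitioned in blocks $A_{[k],[l]}\in\mathbb C^{|[k]|\times|[l]|}$, and $A^{[k]}$ is the truncation to block rows/columns $0,\dots,k-1$. For a linear functional $u$ on $\mathbb C[\boldsymbol x]$ (applied entrywise to matrices), $\langle Qu,P\rangle:=\langle u,QP\rangle$; moment matrix $G=\langle u,\chi\chi^\top\rangle$; $u$ is quasi-definite if $\det G^{[k]}\ne0$ for all $k$, and then $G=S^{-1}HS^{-\top}$ (Cholesky) with $S$ block lower unitriangular, $H$ block diagonal; the monic multivariate orthogonal polynomials are $P(\boldsymbol x)=S\chi(\boldsymbol x)$ with blocks $P_{[k]}$. $\check S,\check H,\check P$ denote the same objects for $\check u$. *)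

From HB Require Import structures.
From mathcomp Require Import all_boot all_order all_algebra.
From mathcomp Require Import complex.
From mathcomp Require Import reals.
From mathcomp Require Import mpoly.

Set Implicit Arguments.
Unset Strict Implicit.
Unset Printing Implicit Defensive.

Import Order.TTheory GRing.Theory Num.Theory.
Local Open Scope ring_scope.

Section MOPDefs.
Variables (C : fieldType) (D : nat).

(* Semi-infinite matrices, rows and columns indexed by multi-indices
   alpha in Z_+^D.  The block [k] consists of the alpha with mdeg alpha = k;
   block (A_{[k],[l]}) is the restriction of A to [k] x [l]. *)
Definition smat := 'X_{1..D} -> 'X_{1..D} -> C.

Definition mono (a : 'X_{1..D}) : {mpoly C[D]} := 'X_[a].

Definition lin_functional (u : {mpoly C[D]} -> C) : Prop :=
  forall (a : C) (p q : {mpoly C[D]}), u (a *: p + q) = a * u p + u q.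

Definition moment (u : {mpoly C[D]} -> C) : smat :=
  fun a b => u (mono a * mono b).

(* truncation A^{[k]} : block rows/columns 0..k-1, i.e. the multi-indices of
   total degree < k (enumerated through the finite type 'X_{1..D < k}) *)
Definition ev (k : nat) (i : 'I_#|{: 'X_{1..D < k}}|) : 'X_{1..D} :=
  bmnm (enum_val i : 'X_{1..D < k}).

Definition trunc (A : smat) (k : nat) : 'M[C]_#|{: 'X_{1..D < k}}| :=
  \matrix_(i, j) A (ev i) (ev j).

(* row alpha of the block row (A_{[k],[0]}, ..., A_{[k],[k-1]}) *)
Definition rowblk (A : smat) (a : 'X_{1..D}) (k : nat) : 'rV[C]_#|{: 'X_{1..D < k}}| :=
  \row_j A a (ev j).

Definition quasi_definite (u : {mpoly C[D]} -> C) : Prop :=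
  forall k : nat, \det (trunc (moment u) k) != 0.

Definition delta : smat := fun a b => (a == b)%:R.

Definition blk_lower_unitri (S : smat) : Prop :=
  (forall a b, (mdeg a < mdeg b)%N -> S a b = 0) /\
  (forall a b, mdeg a = mdeg b -> S a b = delta a b).

Definition blk_diag (H : smat) : Prop :=
  forall a b, mdeg a != mdeg b -> H a b = 0.

(* product L * A with L block lower triangular (row alpha of L is supported on
   the multi-indices of degree <= |alpha|) *)
Definition lmulL (L A : smat) : smat :=
  fun a c => \sum_(b : 'X_{1..D < (mdeg a).+1}) L a b * A b c.

(* product A * L^T with L block lower triangular *)
Definition rmulT (A L : smat) : smat :=
  fun a c => \sum_(b : 'X_{1..D < (mdeg c).+1}) A a b * L c b.

(* Cholesky factorization G = S^{-1} H S^{-T}, written as S G S^T = H *)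
Definition cholesky (u : {mpoly C[D]} -> C) (S H : smat) : Prop :=
  [/\ blk_lower_unitri S, blk_diag H & rmulT (lmulL S (moment u)) S = H].

(* Si = S^{-1} (inverse in the algebra of block lower triangular matrices) *)
Definition inverse_lower (S Si : smat) : Prop :=
  [/\ blk_lower_unitri Si, lmulL S Si = delta & lmulL Si S = delta].

Definition MOP (S : smat) (a : 'X_{1..D}) : {mpoly C[D]} :=
  \sum_(b : 'X_{1..D < (mdeg a).+1}) S a b *: mono b.

Definition Rmat (uc : {mpoly C[D]} -> C) (S : smat) : smat :=
  fun a b => uc (MOP S a * mono b).

Definition Blk (l : nat) := {b : 'X_{1..D < l.+1} | mdeg b == l}.

Definition Emat (l k : nat) : 'M[C]_(#|{: 'X_{1..D < k}}|, #|{: Blk l}|) :=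
  \matrix_(i, j) (ev i == bmnm (val (enum_val j : Blk l)))%:R.

(* row alpha of the block (A_{[k],[l]}) *)
Definition rowblk_l (A : smat) (a : 'X_{1..D}) (l : nat) : 'rV[C]_#|{: Blk l}| :=
  \row_j A a (bmnm (val (enum_val j : Blk l))).

End MOPDefs.

From HB Require Import structures.
From mathcomp Require Import all_boot all_order all_algebra.
From mathcomp Require Import complex.
From mathcomp Require Import reals.
From mathcomp Require Import mpoly.
From mathcomp Require Import boolp.
Import Order.TTheory GRing.Theory Num.Theory.
Local Open Scope ring_scope.

Set Implicit Arguments.
Unset Strict Implicit.
Unset Printing Implicit Defensive.

(* Since R = S G' with G' the moment matrix of uc, the truncation R^[k] is
   S^[k] G'^[k], a product of nonsingular matrices.  Moreover
   w1 R = Sc S^-1 S G' = Sc G' = Hc Sc^-T is block upper triangular, so for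
   |a| = k the row a of w1 R vanishes on the columns of degree < k; as w1 is
   block lower unitriangular, that row reads
   (w1_{[k],[0]}, ..., w1_{[k],[k-1]}) R^[k] + (R_{[k],[0]}, ..., R_{[k],[k-1]}) = 0. *)

Section MultiIndexSums.
Variable D : nat.
Local Notation X := 'X_{1..D}.

Definition mons (n : nat) : seq X := map val (enum {: 'X_{1..D < n}}).

Lemma mem_mons n m : (m \in mons n) = (mdeg m < n)%N.
Proof.
apply/mapP/idP => [[b _ ->]|lt_mn]; first exact: bmdeg.
by exists (BMultinom lt_mn); rewrite ?mem_enum.
Qed.

Lemma uniq_mons n : uniq (mons n).
Proof. by rewrite map_inj_uniq ?enum_uniq //; apply: val_inj. Qed.

Variable V : nmodType.
Implicit Types (F G : X -> V) (n N : nat).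

Lemma big_bmnm n F : \sum_(b : 'X_{1..D < n}) F (bmnm b) = \sum_(m <- mons n) F m.
Proof. by rewrite big_map big_enum. Qed.

Lemma big_ev n F : \sum_(i < #|{: 'X_{1..D < n}}|) F (ev i) = \sum_(m <- mons n) F m.
Proof.
rewrite -big_bmnm (reindex (@enum_rank _)) /=; last exact/onW_bij/enum_rank_bij.
by apply: eq_bigr => b _; rewrite /ev enum_rankK.
Qed.

Lemma eq_big_mons n F G : (forall m, (mdeg m < n)%N -> F m = G m) ->
  \sum_(m <- mons n) F m = \sum_(m <- mons n) G m.
Proof. by move=> eqFG; apply: eq_big_seq => m; rewrite mem_mons; apply: eqFG. Qed.

Lemma big_mons_widen n N F : (n <= N)%N ->
  \sum_(m <- mons n) F m = \sum_(m <- mons N | (mdeg m < n)%N) F m.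
Proof.
move=> le_nN; rewrite -[RHS]big_filter; apply: perm_big.
apply: uniq_perm; rewrite ?filter_uniq ?uniq_mons //.
move=> m; rewrite mem_filter !mem_mons; apply/idP/andP => [lt_mn|[] //].
by split; last exact: leq_trans le_nN.
Qed.

Lemma big_mons_extend n N F : (n <= N)%N ->
  (forall m, (n <= mdeg m)%N -> F m = 0) ->
  \sum_(m <- mons n) F m = \sum_(m <- mons N) F m.
Proof.
move=> le_nN F0; rewrite (big_mons_widen F le_nN) [RHS](bigID (fun m => mdeg m < n)%N) /=.
by rewrite [X in _ = _ + X]big1 ?addr0 // => m; rewrite -leqNgt; apply: F0.
Qed.

Lemma big_mons_delta n e F : (mdeg e < n)%N ->
  \sum_(m <- mons n) (if e == m then F m else 0) = F e.
Proof.
move=> lt_en; rewrite (bigD1_seq e) ?mem_mons ?uniq_mons //= eqxx big1 ?addr0 // => m.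
by rewrite eq_sym => /negbTE ->.
Qed.

End MultiIndexSums.

Arguments mons {D} n.

Section SemiInfiniteMatrices.
Variables (C : fieldType) (D : nat).
Local Notation X := 'X_{1..D}.
Local Notation smat := (smat C D).
Implicit Types (A B L M : smat) (a b c : X).

Lemma smat_ext A B : (forall a c, A a c = B a c) -> A = B.
Proof. by move=> eqAB; do 2![apply: funext => ?]; apply: eqAB. Qed.

Definition blk_lower L : Prop := forall a b, (mdeg a < mdeg b)%N -> L a b = 0.

Lemma blk_lower_unitriW L : blk_lower_unitri L -> blk_lower L.
Proof. by case. Qed.

Lemma mulr_natl_if (p : bool) (x : C) : p%:R * x = if p then x else 0.
Proof. by case: p; rewrite ?mul1r ?mul0r. Qed.

Lemma lmulL_mons L A a c N : (mdeg a < N)%N -> blk_lower L ->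
  lmulL L A a c = \sum_(m <- mons N) L a m * A m c.
Proof.
move=> lt_aN lowL; rewrite /lmulL (big_bmnm _ (fun m => L a m * A m c)).
by apply: big_mons_extend => // m lt_am; rewrite lowL ?mul0r.
Qed.

Lemma lmulL_deltal A : lmulL (@delta C D) A = A.
Proof.
apply: smat_ext => a c.
rewrite /lmulL (big_bmnm _ (fun m => delta C a m * A m c)).
under eq_bigr do rewrite mulr_natl_if.
exact: big_mons_delta.
Qed.

Lemma lmulLA L M A : blk_lower M -> lmulL (lmulL L M) A = lmulL L (lmulL M A).
Proof.
move=> lowM; apply: smat_ext => a c; rewrite {1 3}/lmulL.
under [RHS]eq_bigr => e _ do rewrite (lmulL_mons _ _ (bmdeg e) lowM) mulr_sumr.
rewrite exchange_big /= -big_bmnm.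
by apply: eq_bigr => b _; rewrite mulr_suml; apply: eq_bigr => e _; rewrite mulrA.
Qed.

Lemma lmulL_unitri_diag L M a m : blk_lower_unitri L -> blk_lower_unitri M ->
  mdeg m = mdeg a -> lmulL L M a m = (a == m)%:R.
Proof.
move=> [_ diagL] [lowM diagM] e_ma.
rewrite /lmulL (big_bmnm _ (fun b => L a b * M b m)).
rewrite (eq_big_mons (G := fun b => if a == b then M b m else 0)).
  by rewrite big_mons_delta // diagM.
move=> b; rewrite ltnS leq_eqVlt => /orP[/eqP e_ba|lt_ba].
  by rewrite diagL // mulr_natl_if.
by rewrite lowM ?e_ma // mulr0; case: eqP lt_ba => // <-; rewrite ltnn.
Qed.

Lemma lmulL_unitri_row L A a c : (forall m, mdeg m = mdeg a -> L a m = (a == m)%:R) ->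
  lmulL L A a c = \sum_(m <- mons (mdeg a)) L a m * A m c + A a c.
Proof.
move=> diagL; rewrite /lmulL (big_bmnm _ (fun m => L a m * A m c)).
rewrite (bigID (fun m => mdeg m < mdeg a)%N) /= -big_mons_widen //; congr (_ + _).
rewrite big_mkcond /= (eq_big_mons (G := fun m => if a == m then A m c else 0)).
  exact: big_mons_delta.
move=> m; rewrite ltnS leq_eqVlt => /orP[/eqP e_ma|lt_ma].
  by rewrite e_ma ltnn /= diagL // mulr_natl_if.
by rewrite lt_ma; case: eqP lt_ma => // <-; rewrite ltnn.
Qed.

Lemma rmulT_blk_upper M L : blk_lower_unitri L ->
  (forall a c, (mdeg c < mdeg a)%N -> rmulT M L a c = 0) ->
  forall a c, (mdeg c < mdeg a)%N -> M a c = 0.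
Proof.
move=> [lowL diagL] MLupper a c; have [n] := ubnP (mdeg c).
elim: n c => // n IHn c; rewrite ltnS => le_cn lt_ca.
rewrite -(MLupper a c lt_ca) /rmulT (big_bmnm _ (fun b => M a b * L c b)).
rewrite (eq_big_mons (G := fun b => if c == b then M a b else 0)).
  by rewrite big_mons_delta.
move=> b; rewrite ltnS leq_eqVlt => /orP[/eqP e_bc|lt_bc].
  by rewrite (diagL c b (esym e_bc)) mulrC mulr_natl_if.
rewrite IHn ?mul0r; last exact: ltn_trans lt_ca.
  by case: eqP lt_bc => // <-; rewrite ltnn.
exact: leq_trans lt_bc le_cn.
Qed.

Lemma trunc_lmulL L A k : blk_lower L -> trunc (lmulL L A) k = trunc L k *m trunc A k.
Proof.
move=> lowL; apply/matrixP => i j; rewrite !mxE (lmulL_mons _ _ (bmdeg _)) //.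
under [RHS]eq_bigr do rewrite !mxE.
by rewrite (big_ev _ (fun m => L (ev i) m * A m (ev j))).
Qed.

Lemma ev_inj k : injective (@ev D k).
Proof. by move=> i j /val_inj; apply: enum_val_inj. Qed.

Lemma trunc_delta k : trunc (@delta C D) k = 1%:M.
Proof. by apply/matrixP => i j; rewrite !mxE /delta (inj_eq (@ev_inj k)). Qed.

Lemma rowblk_mul_trunc A B a k j :
  (rowblk A a k *m trunc B k) 0 j = \sum_(m <- mons k) A a m * B m (ev j).
Proof.
rewrite !mxE; under eq_bigr do rewrite !mxE.
exact: (big_ev _ (fun m => A a m * B m (ev j))).
Qed.

Lemma rowblk_mul_Emat A a k l : (l < k)%N -> rowblk A a k *m @Emat C D l k = rowblk_l A a l.
Proof.
move=> lt_lk; apply/rowP => j; rewrite !mxE; under eq_bigr do rewrite !mxE.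
set b := bmnm _; have deg_b : mdeg b = l by apply/eqP; apply: (valP (enum_val j)).
rewrite (big_ev _ (fun m => A a m * (m == b)%:R)).
rewrite (eq_big_mons (G := fun m => if b == m then A a m else 0)).
  by rewrite big_mons_delta ?deg_b.
by move=> m _; rewrite mulrC mulr_natl_if eq_sym.
Qed.

End SemiInfiniteMatrices.

Section LinearFunctionals.
Variables (C : fieldType) (D : nat) (uc : {mpoly C[D]} -> C).
Hypothesis lin_uc : lin_functional uc.

Lemma lin_functional0 : uc 0 = 0.
Proof.
have := lin_uc 1 0 0; rewrite scale1r addr0 mul1r => uc00.
by apply: (addrI (uc 0)); rewrite -uc00 addr0.
Qed.

Lemma lin_functional_sum I (s : seq I) (c : I -> C) (p : I -> {mpoly C[D]}) :
  uc (\sum_(i <- s) c i *: p i) = \sum_(i <- s) c i * uc (p i).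
Proof.
elim: s => [|i s IHs]; first by rewrite !big_nil lin_functional0.
by rewrite !big_cons lin_uc IHs.
Qed.

Lemma Rmat_lmulL S : Rmat uc S = lmulL S (moment uc).
Proof.
apply: smat_ext => a c.
rewrite /Rmat /MOP mulr_suml; under eq_bigr do rewrite -scalerAl.
exact: lin_functional_sum.
Qed.

End LinearFunctionals.

Section FactorMatrices.
Variables (C : fieldType) (D : nat) (uc : {mpoly C[D]} -> C).
Variables (S Sc Hc Si : smat C D).
Hypotheses (lin_uc : lin_functional uc) (uc_qdef : quasi_definite uc).
Hypotheses (S_unitri : blk_lower_unitri S) (chol_uc : cholesky uc Sc Hc).
Hypothesis S_inv : inverse_lower S Si.

Local Notation Rm := (Rmat uc S).
Local Notation w1 := (lmulL Sc Si).

Let Si_unitri : blk_lower_unitri Si. Proof. by case: S_inv. Qed.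
Let Sc_unitri : blk_lower_unitri Sc. Proof. by case: chol_uc. Qed.
Let S_lower : blk_lower S. Proof. exact: blk_lower_unitriW. Qed.
Let Si_lower : blk_lower Si. Proof. exact: blk_lower_unitriW. Qed.

Lemma trunc_Rmat_unit k : trunc Rm k \in unitmx.
Proof.
have SiS1 : trunc Si k *m trunc S k = 1%:M.
  by case: S_inv => _ _ SiS; rewrite -trunc_lmulL // SiS trunc_delta.
rewrite Rmat_lmulL // trunc_lmulL // unitmx_mul; apply/andP; split.
  by have [] := mulmx1_unit SiS1.
by rewrite unitmxE unitfE.
Qed.

Lemma lmulL_moment_blk_upper a c : (mdeg c < mdeg a)%N -> lmulL Sc (moment uc) a c = 0.
Proof.
case: chol_uc => _ Hc_diag Hc_def; apply: (rmulT_blk_upper Sc_unitri) => a' c' lt_ca.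
by rewrite Hc_def; apply: Hc_diag; rewrite neq_ltn lt_ca orbT.
Qed.

Lemma lmulL_w1_Rmat : lmulL w1 Rm = lmulL Sc (moment uc).
Proof.
rewrite Rmat_lmulL // !lmulLA // -(lmulLA Si) //.
by case: S_inv => _ _ ->; rewrite lmulL_deltal.
Qed.

Lemma rowblk_w1 k a : mdeg a = k ->
  rowblk w1 a k = - (rowblk Rm a k *m invmx (trunc Rm k)).
Proof.
move=> deg_a; rewrite -mulNmx; apply: (canRL (mulmxK (trunc_Rmat_unit k))).
apply/rowP => j; rewrite rowblk_mul_trunc !mxE; set c := ev j; apply/eqP.
rewrite -addr_eq0 -deg_a -lmulL_unitri_row => [|m deg_m].
  by rewrite lmulL_w1_Rmat lmulL_moment_blk_upper // deg_a; apply: bmdeg.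
exact: lmulL_unitri_diag.
Qed.

End FactorMatrices.

Theorem mainTheorem2 (R : realType) (D : nat)
  (u uc : {mpoly (complex R)[D]} -> complex R) (Q2 : {mpoly (complex R)[D]})
  (S H Sc Hc Si : smat (complex R) D) :
  (0 < D)%N ->
  lin_functional u -> lin_functional uc ->
  (forall p : {mpoly (complex R)[D]}, uc (Q2 * p) = u p) ->
  quasi_definite u -> quasi_definite uc ->
  cholesky u S H -> cholesky uc Sc Hc -> inverse_lower S Si ->
  let Rm := Rmat uc S in
  let w1 := lmulL Sc Si in
  (forall k : nat, (0 < k)%N -> trunc Rm k \in unitmx) /\
  (forall (k : nat) (a : 'X_{1..D}), (0 < k)%N -> mdeg a = k ->
     rowblk w1 a k = - (rowblk Rm a k *m invmx (trunc Rm k))) /\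
  (forall (k l : nat) (a : 'X_{1..D}), (l < k)%N -> mdeg a = k ->
     rowblk_l w1 a l = - (rowblk Rm a k *m invmx (trunc Rm k) *m @Emat (complex R) D l k)).
Proof.
move=> _ _ lin_uc _ _ uc_qdef [S_unitri _ _] chol_uc S_inv Rm w1.
have Rm_unit := trunc_Rmat_unit lin_uc uc_qdef S_unitri S_inv.
have w1_row := rowblk_w1 lin_uc uc_qdef S_unitri chol_uc S_inv.
split=> [k _|]; first exact: Rm_unit.
split=> [k a _|k l a lt_lk deg_a]; first exact: w1_row.
by rewrite -(rowblk_mul_Emat _ _ lt_lk) (w1_row _ _ deg_a) mulNmx.
Qed.
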